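(* Let $X \in \mathbb{R}^{n\times p}$, $y \in \mathbb{R}^n$, $\rho > 0$ and let $k$ be a positive integer. Define \[ \nu_{\ell 0} := \min_{\beta \in \mathbb{R}^p,\ \|\beta\|_0 \le k} \ \frac{1}{2}\|X\beta - y\|_2^2 + \frac{1}{2}\rho\|\beta\|_2^2, \] \[ \nu_{PWG} := \min_{t \in \mathbb{R},\ z \in [0,1]^p} \ \frac{1}{2} t \quad \text{s.t.} \quad \begin{bmatrix} t & y^T \\ y & I_n + \frac{1}{\rho} X \mathbf{D}(z) X^T\end{bmatrix} \succeq 0,\quad e^T z \le k, \] \[ \nu_{DCL} := \min_{b \in \mathbb{R}^p,\ B \in \mathcal{S}^p,\ z \in \mathbb{R}^p} \ \frac{1}{2}\left\langle \begin{bmatrix} y^Ty & -y^TX \\ -X^Ty & \rho I_p + X^TX\end{bmatrix}, \begin{bmatrix} 1 & b^T \\ b & B\end{bmatrix}\right\rangle \] subject to $\begin{bmatrix} 1 & b^T \\ b & B\end{bmatrix} \succeq 0$, $\begin{bmatrix} z_i & b_i \\ b_i & B_{ii}\end{bmatrix} \succeq 0$ for all $i = 1,\dots,p$, and $\sum_{i=1}^p z_i \le k$. Then \[ \nu_{\ell 0} \ge \nu_{DCL} \ge \nu_{PWG}. \]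
   Context: $\|\beta\|_0$ denotes the number of nonzero entries of $\beta$. $e$ is the all-ones vector of appropriate dimension, $\mathbf{D}(z)$ is the $p\times p$ diagonal matrix with diagonal entries $z_1,\dots,z_p$, $\mathcal{S}^p$ is the space of real symmetric $p\times p$ matrices, $\succeq 0$ denotes positive semidefiniteness, and $\langle A, C\rangle = \mathrm{trace}(A^T C)$ is the trace inner product. *)

From HB Require Import structures.
From mathcomp Require Import all_boot all_order all_algebra.
From mathcomp Require Import classical_sets reals.
Set Implicit Arguments. Unset Strict Implicit. Unset Printing Implicit Defensive.
Import Order.TTheory GRing.Theory Num.Theory.
Local Open Scope ring_scope.
Local Open Scope classical_set_scope.

Section Defs.
Variable R : realType.

Definition psd (m : nat) (A : 'M[R]_m) : Prop :=
  A^T = A /\ forall v : 'cV[R]_m, 0 <= (v^T *m A *m v) 0 0.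

Definition l0norm (p : nat) (beta : 'cV[R]_p) : nat := #|[set i | beta i 0 != 0]|.

Definition sqnorm (m : nat) (v : 'cV[R]_m) : R := \sum_i (v i 0) ^+ 2.

Definition tr_inner (m : nat) (A C : 'M[R]_m) : R := \tr (A^T *m C).

Definition nu_l0 (n p : nat) (X : 'M[R]_(n, p)) (y : 'cV[R]_n) (rho : R) (k : nat) : R :=
  inf [set v : R | exists beta : 'cV[R]_p, (l0norm beta <= k)%N /\
     v = 2^-1 * sqnorm (X *m beta - y) + 2^-1 * rho * sqnorm beta].

Definition nu_PWG (n p : nat) (X : 'M[R]_(n, p)) (y : 'cV[R]_n) (rho : R) (k : nat) : R :=
  inf [set v : R | exists (t : R) (z : 'cV[R]_p),
     (forall i, 0 <= z i 0 <= 1) /\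
     psd (block_mx (t%:M : 'M_1) y^T y (1%:M + rho^-1 *: (X *m diag_mx z^T *m X^T))) /\
     \sum_i z i 0 <= k%:R /\
     v = 2^-1 * t].

Definition nu_DCL (n p : nat) (X : 'M[R]_(n, p)) (y : 'cV[R]_n) (rho : R) (k : nat) : R :=
  inf [set v : R | exists (b : 'cV[R]_p) (B : 'M[R]_p) (z : 'cV[R]_p),
     B^T = B /\
     psd (block_mx (1%:M : 'M_1) b^T b B) /\
     (forall i, psd (block_mx ((z i 0)%:M : 'M_1) (b i 0)%:M (b i 0)%:M ((B i i)%:M : 'M_1))) /\
     \sum_i z i 0 <= k%:R /\
     v = 2^-1 * tr_inner
           (block_mx (y^T *m y) (- (y^T *m X)) (- (X^T *m y)) (rho *: 1%:M + X^T *m X))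
           (block_mx (1%:M : 'M_1) b^T b B)].
End Defs.

(* l0 >= DCL: a k-sparse beta yields the DCL point b = beta, B = beta beta^T,
   z = indicator of the support of beta, whose cost is exactly the l0 objective.
   DCL >= PWG: from a DCL point (b, B, z) take t = its cost and z clipped to
   [0, 1].  The Schur complement of the unit corner gives b_i^2 <= B_ii and
   |X b|^2 <= tr (X B X^T), the 2x2 constraints give b_i^2 <= z_i B_ii, and with
   v = X^T w the PWG quadratic form at (u, w) splits as
     |u (y - X b) + w|^2 + u^2 (tr (X B X^T) - |X b|^2)
       + sum_i (rho B_ii u^2 + 2 b_i u v_i + rho^-1 z_i v_i^2),
   a sum of nonnegative terms. *)

From mathcomp Require Import all_boot all_order all_algebra.
From mathcomp Require Import boolp classical_sets reals.
From mathcomp Require Import ring lra.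
Set Implicit Arguments. Unset Strict Implicit. Unset Printing Implicit Defensive.
Import Order.TTheory GRing.Theory Num.Theory.
Local Open Scope ring_scope.

Lemma binary_form_ge0P (R : realFieldType) (a b c : R) :
  (forall u w : R, 0 <= a * u ^+ 2 + 2 * b * u * w + c * w ^+ 2) <->
  [/\ 0 <= a, 0 <= c & b ^+ 2 <= a * c].
Proof.
split=> [form_ge0 | [a_ge0 c_ge0 disc_le]].
- have a_ge0 : 0 <= a by have := form_ge0 1 0; rewrite expr1n expr0n /=; lra.
  have c_ge0 : 0 <= c by have := form_ge0 0 1; rewrite expr1n expr0n /=; lra.
  split=> //; have [c0 | c_neq0] := eqVneq c 0.
  + (* the form at (b, - (a + 1)) is - (a + 2) b^2 *)
    have := mulr_ge0 a_ge0 (sqr_ge0 b).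
    have := form_ge0 b (- (a + 1)); rewrite c0; nra.
  + have := form_ge0 c (- b).
    have -> : a * c ^+ 2 + 2 * b * c * - b + c * (- b) ^+ 2 = c * (a * c - b ^+ 2).
      by ring.
    by rewrite pmulr_rge0 ?subr_ge0 // lt0r c_neq0.
- move=> u w; have [a0 | a_neq0] := eqVneq a 0.
  + have b0 : b = 0.
      by apply/eqP; rewrite -sqrf_eq0 eq_le sqr_ge0 andbT -(mul0r c) -a0.
    by rewrite a0 b0; nra.
  + rewrite -(@pmulr_rge0 _ a) ?lt0r ?a_neq0 //.
    have -> : a * (a * u ^+ 2 + 2 * b * u * w + c * w ^+ 2) =
              (a * u + b * w) ^+ 2 + (a * c - b ^+ 2) * w ^+ 2 by ring.
    by apply: addr_ge0; rewrite ?sqr_ge0 // mulr_ge0 ?subr_ge0 ?sqr_ge0.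
Qed.

Section QuadraticForms.
Variable R : realType.
Implicit Types (m : nat) (a : R).

Definition qform {m} (A : 'M[R]_m) (v : 'cV[R]_m) : R := (v^T *m A *m v) 0 0.

Lemma cvdotE m (u v : 'cV[R]_m) : (u^T *m v) 0 0 = \sum_i u i 0 * v i 0.
Proof. by rewrite mxE; apply: eq_bigr => i _; rewrite mxE. Qed.

Lemma cvdotC m (u v : 'cV[R]_m) : (u^T *m v) 0 0 = (v^T *m u) 0 0.
Proof. by rewrite !cvdotE; apply: eq_bigr => i _; rewrite mulrC. Qed.

Lemma sqnormE m (v : 'cV[R]_m) : sqnorm v = (v^T *m v) 0 0.
Proof. by rewrite cvdotE; apply: eq_bigr => i _; rewrite expr2. Qed.

Lemma sqnorm_ge0 m (v : 'cV[R]_m) : 0 <= sqnorm v.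
Proof. by apply: sumr_ge0 => i _; apply: sqr_ge0. Qed.

Lemma sqnormD m (u v : 'cV[R]_m) :
  sqnorm (u + v) = sqnorm u + 2 * (u^T *m v) 0 0 + sqnorm v.
Proof.
rewrite /sqnorm cvdotE mulr_sumr -!big_split; apply: eq_bigr => i _ /=.
by rewrite mxE; ring.
Qed.

Lemma sqnormZ m a (v : 'cV[R]_m) : sqnorm (a *: v) = a ^+ 2 * sqnorm v.
Proof. by rewrite /sqnorm mulr_sumr; apply: eq_bigr => i _; rewrite mxE exprMn. Qed.

Lemma sqnormB m (u v : 'cV[R]_m) :
  sqnorm (u - v) = sqnorm u - 2 * (u^T *m v) 0 0 + sqnorm v.
Proof.
rewrite /sqnorm cvdotE mulr_sumr -!sumrB -!big_split; apply: eq_bigr => i _ /=.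
by rewrite !mxE; ring.
Qed.

Lemma qformD m (A C : 'M[R]_m) v : qform (A + C) v = qform A v + qform C v.
Proof. by rewrite /qform mulmxDr mulmxDl mxE. Qed.

Lemma qformZ m a (A : 'M[R]_m) v : qform (a *: A) v = a * qform A v.
Proof. by rewrite /qform -scalemxAr -scalemxAl mxE. Qed.

Lemma qform1 m (v : 'cV[R]_m) : qform 1%:M v = sqnorm v.
Proof. by rewrite /qform mulmx1 sqnormE. Qed.

Lemma mxtrace_outer m (v : 'cV[R]_m) : \tr (v *m v^T) = sqnorm v.
Proof. by rewrite mxtrace_mulC trace_mx11 sqnormE. Qed.

Lemma qform_mulmx m n (X : 'M[R]_(m, n)) (A : 'M_n) (w : 'cV_m) :
  qform (X *m A *m X^T) w = qform A (X^T *m w).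
Proof. by rewrite /qform trmx_mul trmxK !mulmxA. Qed.

Lemma qform_diag m (d : 'cV[R]_m) v :
  qform (diag_mx d^T) v = \sum_i d i 0 * v i 0 ^+ 2.
Proof.
rewrite /qform mul_mx_diag mxE; apply: eq_bigr => i _; rewrite !mxE; ring.
Qed.

Lemma qform_outer m (v x : 'cV[R]_m) : qform (v *m v^T) x = (v^T *m x) 0 0 ^+ 2.
Proof.
by rewrite /qform mulmxA -mulmxA mxE big_ord1 expr2 cvdotC.
Qed.

Lemma mxtrace_qform m n (X : 'M[R]_(m, n)) (A : 'M_n) :
  \tr (X *m A *m X^T) = \sum_j qform A (row j X)^T.
Proof.
apply: eq_bigr => j _.
by rewrite /qform trmxK tr_row colE mulmxA -!row_mul -colE !mxE.
Qed.

Lemma qform_block a m (c : 'cV[R]_m) (D : 'M_m) u w :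
  qform (block_mx a%:M c^T c D) (col_mx u%:M w) =
  a * u ^+ 2 + 2 * u * (c^T *m w) 0 0 + qform D w.
Proof.
rewrite /qform tr_col_mx tr_scalar_mx mul_row_block mul_row_col !mulmxDl.
rewrite -!scalar_mxM !mul_scalar_mx mul_mx_scalar -scalemxAl.
rewrite -[w^T *m c]trmxK trmx_mul trmxK !mxE eqxx mulr1n.
ring.
Qed.

Lemma psd_block_scalarP a m (c : 'cV[R]_m) (D : 'M_m) :
  psd (block_mx a%:M c^T c D) <->
  D^T = D /\ forall u w, 0 <= a * u ^+ 2 + 2 * u * (c^T *m w) 0 0 + qform D w.
Proof.
rewrite /psd; have -> : (block_mx a%:M c^T c D)^T = block_mx a%:M c^T c D^T.
  by rewrite tr_block_mx tr_scalar_mx trmxK.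
split=> [[/eq_block_mx[_ _ _ ->] form_ge0] | [-> form_ge0]].
- split=> // u w; rewrite -qform_block; exact: form_ge0.
- split=> // v; rewrite -/(qform _ v) -(vsubmxK v) (mx11_scalar (usubmx v)) qform_block.
  exact: form_ge0.
Qed.

Lemma psd_scalar2P (z b B : R) :
  psd (block_mx z%:M b%:M b%:M B%:M : 'M_(1 + 1)) <->
  [/\ 0 <= z, 0 <= B & b ^+ 2 <= z * B].
Proof.
have scalar_dotE (w : 'cV[R]_1) : ((b%:M)^T *m w) 0 0 = b * w 0 0.
  by rewrite tr_scalar_mx mul_scalar_mx mxE.
have scalar_qformE (w : 'cV[R]_1) : qform B%:M w = B * w 0 0 ^+ 2.
  by rewrite /qform mul_mx_scalar -scalemxAl mxE -sqnormE /sqnorm big_ord1.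
rewrite -[X in block_mx _ X _ _]tr_scalar_mx psd_block_scalarP tr_scalar_mx.
rewrite -binary_form_ge0P.
have mulrCA2 (u w : R) : 2 * b * u * w = 2 * u * (b * w) by ring.
split=> [[_ form_ge0] u w | form_ge0].
- have := form_ge0 u w%:M.
  by rewrite scalar_dotE scalar_qformE mxE eqxx mulr1n mulrCA2.
- split=> // u w; rewrite scalar_dotE scalar_qformE -mulrCA2; exact: form_ge0.
Qed.

Lemma psd_block1_dot_le m (b : 'cV[R]_m) (B : 'M_m) :
  psd (block_mx 1%:M b^T b B) -> forall x, (b^T *m x) 0 0 ^+ 2 <= qform B x.
Proof.
move=> /psd_block_scalarP[_ form_ge0] x; have := form_ge0 (- (b^T *m x) 0 0) x.
by rewrite sqrrN mul1r; nra.
Qed.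

Lemma psd_block1_diag_le m (b : 'cV[R]_m) (B : 'M_m) i :
  psd (block_mx 1%:M b^T b B) -> b i 0 ^+ 2 <= B i i.
Proof.
move=> /psd_block1_dot_le/(_ (delta_mx i 0)).
by rewrite /qform -colE trmx_delta -rowE -colE !mxE.
Qed.

Lemma sqnorm_mul_le_mxtrace n m (X : 'M[R]_(n, m)) (b : 'cV_m) (B : 'M_m) :
  psd (block_mx 1%:M b^T b B) -> sqnorm (X *m b) <= \tr (X *m B *m X^T).
Proof.
move=> psdB; rewrite mxtrace_qform; apply: ler_sum => j _.
have -> : (X *m b) j 0 = (b^T *m (row j X)^T) 0 0.
  by rewrite -trmx_mul -row_mul !mxE.
exact: psd_block1_dot_le psdB _.
Qed.

Lemma psd_outer m (v : 'cV[R]_m) : psd (v *m v^T).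
Proof. by split=> [|x]; rewrite ?trmx_mul ?trmxK // -/(qform _ x) qform_outer sqr_ge0. Qed.

Lemma psd_block_scalar_ge0 a m (c : 'cV[R]_m) (D : 'M_m) :
  psd (block_mx a%:M c^T c D) -> 0 <= a.
Proof.
move=> /psd_block_scalarP[_ /(_ 1 0)].
by rewrite /qform mulmx0 trmx0 !mul0mx !mxE expr1n !mulr0 mulr1 !addr0.
Qed.

Lemma psd_outer_block1 m (v : 'cV[R]_m) : psd (block_mx 1%:M v^T v (v *m v^T)).
Proof.
have -> : block_mx 1%:M v^T v (v *m v^T) = col_mx 1%:M v *m (col_mx 1%:M v)^T.
  by rewrite tr_col_mx trmx1 mul_col_row !mul1mx mulmx1.
exact: (psd_outer (col_mx (1%:M : 'M_1) v)).
Qed.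

Lemma psd_support_block m (v : 'cV[R]_m) i :
  psd (block_mx ((v i 0 != 0)%:R)%:M (v i 0)%:M (v i 0)%:M ((v *m v^T) i i)%:M : 'M_(1 + 1)).
Proof.
apply/psd_scalar2P; rewrite mxE big_ord1 mxE -expr2.
split; rewrite ?ler0n ?sqr_ge0 //.
by case: eqP => [->|_]; rewrite ?mul1r // expr0n mulr0.
Qed.

Lemma sum_support_l0norm m (v : 'cV[R]_m) :
  \sum_i ((v i 0 != 0)%:R : R) = (l0norm v)%:R.
Proof.
rewrite /l0norm -sum1_card natr_sum [RHS]big_mkcond /=; apply: eq_bigr => i _.
by rewrite /in_mem /= /in_set asboolb; case: (v i 0 != 0).
Qed.

Lemma min1_feasible (z b B : R) :
  psd (block_mx z%:M b%:M b%:M B%:M : 'M_(1 + 1)) -> b ^+ 2 <= B ->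
  [/\ 0 <= Num.min z 1, Num.min z 1 <= 1 & b ^+ 2 <= Num.min z 1 * B].
Proof.
case/psd_scalar2P => z_ge0 _ disc_le sqr_le_B.
by have [z_le1 | _] := leP z 1; rewrite ?z_ge0 ?z_le1 ?ler01 ?lexx ?mul1r.
Qed.

End QuadraticForms.

Section Relaxations.
Variables (R : realType) (n p : nat) (X : 'M[R]_(n, p)) (y : 'cV[R]_n) (rho : R).

Definition dcl_cost (b : 'cV[R]_p) (B : 'M[R]_p) : R :=
  tr_inner (block_mx (y^T *m y) (- (y^T *m X)) (- (X^T *m y)) (rho *: 1%:M + X^T *m X))
           (block_mx 1%:M b^T b B).

Lemma dcl_costE b B :
  dcl_cost b B =
  sqnorm y - 2 * (y^T *m (X *m b)) 0 0 + rho * \tr B + \tr (X *m B *m X^T).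
Proof.
rewrite /dcl_cost /tr_inner tr_block_mx mulmx_block mxtrace_block.
rewrite !linearN /= !trmx_mul !trmxK !linearD /= !linearZ /= trmx1 trmx_mul trmxK.
rewrite mulmx1 !mulNmx !linearN /= mulmxDl mxtraceD -scalemxAl mul1mx mxtraceZ.
rewrite [\tr (X^T *m y *m b^T)]mxtrace_mulC -[X^T *m X *m B]mulmxA.
rewrite [\tr (X^T *m (X *m B))]mxtrace_mulC mulmxA !trace_mx11.
rewrite [(b^T *m _) 0 0]cvdotC trmx_mul trmxK -sqnormE; ring.
Qed.

Lemma dcl_cost_outer beta :
  dcl_cost beta (beta *m beta^T) = sqnorm (X *m beta - y) + rho * sqnorm beta.
Proof.
rewrite dcl_costE; have -> : X *m (beta *m beta^T) *m X^T = (X *m beta) *m (X *m beta)^T.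
  by rewrite trmx_mul !mulmxA.
by rewrite !mxtrace_outer sqnormB cvdotC; ring.
Qed.

Lemma psd_pwg_of_dcl b B (d : 'cV[R]_p) :
  0 < rho -> psd (block_mx 1%:M b^T b B) ->
  (forall i, 0 <= d i 0 /\ b i 0 ^+ 2 <= d i 0 * B i i) ->
  psd (block_mx (dcl_cost b B)%:M y^T y (1%:M + rho^-1 *: (X *m diag_mx d^T *m X^T))).
Proof.
move=> rho_gt0 psdB coord_le; apply/psd_block_scalarP; split.
  by rewrite linearD /= linearZ /= trmx1 !trmx_mul trmxK tr_diag_mx mulmxA.
move=> u w; rewrite qformD qform1 qformZ qform_mulmx; set v := X^T *m w.
have trace_ge := sqnorm_mul_le_mxtrace X psdB.
have cross : ((u *: (y - X *m b))^T *m w) 0 0 = u * ((y^T *m w) 0 0 - (b^T *m v) 0 0).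
  by rewrite linearZ /= -scalemxAl linearB /= mulmxBl trmx_mul -mulmxA !mxE.
have square_ge0 := sqnorm_ge0 (u *: (y - X *m b) + w).
rewrite sqnormD sqnormZ cross sqnormB in square_ge0.
have coord_ge0 :
    0 <= rho * u ^+ 2 * \tr B + 2 * u * (b^T *m v) 0 0 + rho^-1 * qform (diag_mx d^T) v.
  rewrite /mxtrace cvdotE qform_diag !mulr_sumr -!big_split /=.
  apply: sumr_ge0 => i _; have [d_ge0 disc_le] := coord_le i.
  have B_ge0 : 0 <= B i i := le_trans (sqr_ge0 _) (psd_block1_diag_le i psdB).
  have /binary_form_ge0P form_ge0 : [/\ 0 <= rho * B i i, 0 <= rho^-1 * d i 0 &
                                       b i 0 ^+ 2 <= rho * B i i * (rho^-1 * d i 0)].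
    split; rewrite ?mulr_ge0 ?invr_ge0 ?(ltW rho_gt0) //.
    by rewrite mulrACA divff ?gt_eqF // mul1r mulrC.
  have := form_ge0 u (v i 0); lra.
have gap_ge0 : 0 <= u ^+ 2 * (\tr (X *m B *m X^T) - sqnorm (X *m b)).
  by rewrite mulr_ge0 ?sqr_ge0 ?subr_ge0.
rewrite dcl_costE; lra.
Qed.

End Relaxations.

Local Open Scope classical_set_scope.

Lemma le_inf_subset (R : realType) (A B : set R) :
  A `<=` B -> A !=set0 -> has_lbound B -> inf B <= inf A.
Proof. by move=> AB A0 lbB; apply: lb_le_inf A0 _ => x /AB; apply: ge_inf. Qed.

Theorem proposition1 (R : realType) (n p : nat) (X : 'M[R]_(n, p)) (y : 'cV[R]_n)
  (rho : R) (k : nat) (hrho : 0 < rho) (hk : (0 < k)%N) :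
  nu_DCL X y rho k <= nu_l0 X y rho k /\ nu_PWG X y rho k <= nu_DCL X y rho k.
Proof.
rewrite /nu_l0 /nu_DCL /nu_PWG.
set D := [set _ | _]; set L := [set _ | _]; set P := [set _ | _].
have LD : L `<=` D.
  move=> _ [beta [l0_le ->]].
  exists beta, (beta *m beta^T), (\col_i (beta i 0 != 0)%:R).
  split; first by rewrite trmx_mul trmxK.
  split; first exact: psd_outer_block1.
  split; first by move=> i; rewrite mxE; exact: psd_support_block.
  split; first by under eq_bigr do rewrite mxE; rewrite sum_support_l0norm ler_nat.
  by rewrite -/(dcl_cost _ _ _ _ _) dcl_cost_outer mulrDr mulrA.
have DP : D `<=` P.
  move=> _ [b [B [z [_ [psdB [psd2 [sum_le ->]]]]]]].
  have coord i := min1_feasible (psd2 i) (psd_block1_diag_le i psdB).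
  exists (dcl_cost X y rho b B), (\col_i Num.min (z i 0) 1).
  split; first by move=> i; rewrite mxE; case: (coord i) => -> ->.
  split.
    apply: psd_pwg_of_dcl => // i; rewrite mxE.
    by case: (coord i) => min_ge0 _ disc_le.
  split=> //; apply: le_trans sum_le; apply: ler_sum => i _.
  by rewrite mxE ge_min lexx.
have P_ge0 : lbound P 0.
  move=> _ [t [z [_ [psdM [_ ->]]]]].
  by rewrite mulr_ge0 ?invr_ge0 // (psd_block_scalar_ge0 psdM).
have L_neq0 : L !=set0.
  eexists; exists 0; split; last reflexivity.
  rewrite -(@ler_nat R) -sum_support_l0norm big1 // => i _.
  by rewrite mxE eqxx.
have D_lb : has_lbound D by exists 0 => v /DP /P_ge0.
split; apply: le_inf_subset => //; last by exists 0.
by case: L_neq0 => v /LD Dv; exists v.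
Qed.
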